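(* Let $\mathcal{G}=(\mathcal{V},\mathcal{A})$, $|\mathcal{V}|=n$, be the information-flow graph of a single-sender single-uniprior index-coding instance in which every message consists of a single bit ($q_i=1$ for all $i$). Then \[ \ell^*(\mathcal{G}) = n - |\mathcal{L}(\mathcal{G})| - N_{\mathrm{SCC}}(\mathcal{G}), \] where $N_{\mathrm{SCC}}(\mathcal{G})$ is the number of leaf SCCs of $\mathcal{G}$.
   Context: Single-sender single-uniprior index coding: there are $n$ receivers and $n$ independent messages $x_1,\dots,x_n$; message $x_i$ consists of $q_i\ge 1$ bits, each independently uniformly distributed on $\{0,1\}$. A single sender knows all messages. Receiver $i$ knows $x_i$ a priori and requests a set $\mathcal{W}_i$ of messages with $x_i\notin\mathcal{W}_i$. The information-flow graph is the directed graph $\mathcal{G}=(\mathcal{V},\mathcal{A})$ with $\mathcal{V}=\{1,\dots,n\}$ and an arc $(j\to i)\in\mathcal{A}$ iff $x_j\in\mathcal{W}_i$. An index code of length $\ell$ consists of an encoding function $E:\{0,1\}^{\sum_i q_i}\to\{0,1\}^\ell$ and, for each receiver $i$, a decoding function $D_i$ such that $D_i(E(x_1,\dots,x_n),x_i)$ equals the tuple of messages in $\mathcal{W}_i$ for all values of the messages. $\ell^*(\mathcal{G})$ denotes the minimum length of an index code. A leaf vertex is a vertex with no outgoing arcs; $\mathcal{L}(\mathcal{G})$ is the set of leaf vertices. A strongly connected component (SCC) is a maximal subgraph in which every ordered pair of vertices is joined by a directed path inside the subgraph. A leaf SCC is an SCC with at least two vertices from which no arc goes to a vertex outside the SCC.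 *)

From mathcomp Require Import all_boot.
Set Implicit Arguments. Unset Strict Implicit. Unset Printing Implicit Defensive.

(* Information-flow graph on vertex set 'I_n given as a relation:
   G j i = true  iff  there is an arc (j -> i), i.e. x_j \in W_i. *)

(* Messages with q_i = 1: a message assignment is one bit per receiver. *)
Definition messages (n : nat) := {ffun 'I_n -> bool}.

(* An index code of length l: encoder E into l-bit strings and, for each
   receiver i, a decoder D i taking the codeword and the side information
   x_i, returning values of the messages; it must return the correct value
   x_j for every requested message x_j \in W_i (i.e. every arc j -> i).
   The decoder output is modelled as a function on 'I_n of which only the
   coordinates in W_i are constrained (= the tuple of requested messages). *)
Definition is_index_code (n : nat) (G : rel 'I_n) (l : nat)
    (E : messages n -> l.-tuple bool)
    (D : 'I_n -> l.-tuple bool -> bool -> 'I_n -> bool) : Prop :=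
  forall (x : messages n) (i j : 'I_n), G j i -> D i (E x) (x i) j = x j.

Definition has_index_code (n : nat) (G : rel 'I_n) (l : nat) : Prop :=
  exists E D, @is_index_code n G l E D.

Definition is_min_code_length (n : nat) (G : rel 'I_n) (k : nat) : Prop :=
  has_index_code G k /\ (forall l, has_index_code G l -> k <= l).

Definition leaves (n : nat) (G : rel 'I_n) : {set 'I_n} :=
  [set v | [forall u, ~~ G v u]].

Definition scc_rel (n : nat) (G : rel 'I_n) (u v : 'I_n) : bool :=
  connect G u v && connect G v u.

Definition scc_of (n : nat) (G : rel 'I_n) (u : 'I_n) : {set 'I_n} :=
  [set v | scc_rel G u v].

Definition is_leaf_scc (n : nat) (G : rel 'I_n) (C : {set 'I_n}) : bool :=
  [&& [exists u, C == scc_of G u], 1 < #|C| &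
      [forall u, forall v, (u \in C) && G u v ==> (v \in C)]].

Definition N_SCC (n : nat) (G : rel 'I_n) : nat :=
  #|[set C : {set 'I_n} | is_leaf_scc G C]|.

From mathcomp Require Import all_boot.
Set Implicit Arguments. Unset Strict Implicit. Unset Printing Implicit Defensive.

(* Choose one root in every sink SCC: the leaves are the singleton sink SCCs
   and, the graph being irreflexive, the leaf SCCs are the other ones.  Every
   vertex reaches a root.  Lower bound: for messages vanishing on the roots,
   receiver w recovers x_v from the codeword whenever v -> w, so walking back
   from a root along a path the codeword determines every message; hence the
   2^(n - #roots) such messages get distinct codewords.  Upper bound: send x_j
   for each non-root j outside the leaf SCCs and x_j + x_r(j) for each non-root
   j in a leaf SCC with root r(j); a receiver requesting x_j from a leaf SCC
   lies in that same SCC, so it first learns x_r(j) from its own bit. *)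

Section StrongComponents.

Variables (n : nat) (G : rel 'I_n).

Lemma scc_of_refl u : u \in scc_of G u.
Proof. by rewrite inE /scc_rel connect0. Qed.

Lemma scc_of_eq u v : scc_rel G u v -> scc_of G u = scc_of G v.
Proof.
case/andP=> Huv Hvu; apply/setP=> w; rewrite !inE /scc_rel.
apply/andP/andP=> [[Huw Hwu]|[Hvw Hwv]]; split.
- exact: connect_trans Hvu Huw.
- exact: connect_trans Hwu Huv.
- exact: connect_trans Huv Hvw.
- exact: connect_trans Hwv Hvu.
Qed.

Definition scc_root u : 'I_n := odflt u [pick v in scc_of G u].

Lemma scc_root_mem u : scc_root u \in scc_of G u.
Proof.
rewrite /scc_root; case: pickP => [//|none].
by have := none u; rewrite /= scc_of_refl.
Qed.

Lemma scc_root_eq u v : scc_of G u = scc_of G v -> scc_root u = scc_root v.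
Proof.
move=> Euv; rewrite /scc_root Euv; case: pickP => [//|none].
by have := none v; rewrite /= scc_of_refl.
Qed.

Lemma scc_of_root u : scc_of G (scc_root u) = scc_of G u.
Proof. by symmetry; apply: scc_of_eq; have := scc_root_mem u; rewrite inE. Qed.

Lemma scc_root_idem u : scc_root (scc_root u) = scc_root u.
Proof. exact: scc_root_eq (scc_of_root u). Qed.

Definition in_leaf_scc u : bool := is_leaf_scc G (scc_of G u).

Lemma in_leaf_scc_root u : in_leaf_scc (scc_root u) = in_leaf_scc u.
Proof. by rewrite /in_leaf_scc scc_of_root. Qed.

Lemma in_leaf_scc_arc u v : in_leaf_scc u -> G u v -> scc_of G v = scc_of G u.
Proof.
case/and3P=> _ _ /forallP closed Guv.
have : v \in scc_of G u.
  by move/forallP/(_ v): (closed u); rewrite scc_of_refl Guv.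
by rewrite inE => /scc_of_eq <-.
Qed.

Lemma in_leaf_scc_notin_leaves u : in_leaf_scc u -> u \notin leaves G.
Proof.
case/and3P=> _ /card_gt1P [x [y [Hx Hy Hxy]]] _.
have [v Hv Huv] : exists2 v, v \in scc_of G u & u != v.
  by case: (eqVneq u x) => [Eux|]; [exists y; rewrite // Eux | exists x].
move: Hv; rewrite inE => /andP [/connectP [[|w p] /= Hp Ev] _].
  by rewrite Ev eqxx in Huv.
case/andP: Hp => Guw _.
by rewrite inE negb_forall; apply/existsP; exists w; rewrite Guw.
Qed.

Definition leaf_scc_roots : {set 'I_n} :=
  [set u | in_leaf_scc u & scc_root u == u].

Definition sink_roots : {set 'I_n} := leaves G :|: leaf_scc_roots.

Lemma card_leaf_scc_roots : #|leaf_scc_roots| = N_SCC G.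
Proof.
rewrite /N_SCC.
have -> : [set C | is_leaf_scc G C] = [set scc_of G u | u in leaf_scc_roots].
  apply/setP=> C; rewrite inE; apply/idP/imsetP.
  - move=> leafC; have /and3P [/existsP [u /eqP EC] _ _] := leafC.
    exists (scc_root u); last by rewrite scc_of_root.
    by rewrite inE in_leaf_scc_root scc_root_idem eqxx /in_leaf_scc -EC leafC.
  - by case=> u; rewrite inE => /andP [leafu _] ->.
rewrite card_in_imset // => u v; rewrite !inE => /andP [_ /eqP Eu] /andP [_ /eqP Ev].
by move/scc_root_eq; rewrite Eu Ev.
Qed.

Lemma card_sink_roots : #|sink_roots| = #|leaves G| + N_SCC G.
Proof.
rewrite /sink_roots cardsU -card_leaf_scc_roots.
suff -> : leaves G :&: leaf_scc_roots = set0 by rewrite cards0 subn0.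
apply/setP=> u; rewrite !inE; apply/negP=> /and3P [leafu sccu _].
by move: (in_leaf_scc_notin_leaves sccu); rewrite inE leafu.
Qed.

Lemma card_not_sink_roots : #|~: sink_roots| = n - #|leaves G| - N_SCC G.
Proof. by rewrite -subnDA -card_sink_roots cardsCs card_ord setCK. Qed.

(* A vertex w of minimal reachable set among those reachable from v lies in a
   sink SCC. *)
Lemma connect_sink_scc v :
  exists2 w, connect G v w & forall z, connect G w z -> connect G z w.
Proof.
pose reach w := [set z | connect G w z].
case: (@arg_minnP _ v (connect G v) (fun w => #|reach w|) (connect0 G v))
  => w Hvw wmin.
exists w => // z Hwz.
have sub_reach : reach z \subset reach w.
  by apply/subsetP=> y; rewrite !inE; apply: connect_trans.
have /eqP Ereach : reach z == reach w.
  by rewrite eqEcard sub_reach wmin //; apply: connect_trans Hvw Hwz.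
have : w \in reach z by rewrite Ereach inE connect0.
by rewrite inE.
Qed.

Hypothesis G_irrefl : forall i : 'I_n, ~~ G i i.

Lemma connect_sink_roots v : exists2 t, t \in sink_roots & connect G v t.
Proof.
have [w Hvw sinkw] := connect_sink_scc v.
have [/existsP [z Gwz] | noarc] := boolP [exists z, G w z]; last first.
  exists w => //; rewrite inE; apply/orP; left; rewrite inE; apply/forallP=> u.
  by apply: contra noarc => Gwu; apply/existsP; exists u.
have sccw : in_leaf_scc w.
  apply/and3P; split.
  - by apply/existsP; exists w.
  - apply/card_gt1P; exists w, z; split; first exact: scc_of_refl.
    + by rewrite inE /scc_rel connect1 // sinkw // connect1.
    + by move: Gwz; apply: contraTneq => <-; exact: G_irrefl.
  - apply/forallP=> u; apply/forallP=> y; apply/implyP=> /andP [].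
    rewrite !inE /scc_rel => /andP [Hwu _] Guy.
    have Hwy : connect G w y by apply: connect_trans Hwu (connect1 Guy).
    by rewrite Hwy sinkw.
exists (scc_root w).
  by rewrite !inE in_leaf_scc_root sccw scc_root_idem eqxx orbT.
apply: connect_trans Hvw _.
by have := scc_root_mem w; rewrite inE => /andP [].
Qed.

End StrongComponents.

Section IndexCodes.

Variables (n : nat) (G : rel 'I_n).

Lemma index_code_connect l E D (x y : messages n) v t :
  @is_index_code n G l E D -> E x = E y -> x t = y t ->
  connect G v t -> x v = y v.
Proof.
move=> code Exy Ext /connectP [p Hp Et]; rewrite {t}Et in Ext.
elim: p v Hp Ext => [|w p IHp] v //= /andP [Gvw Hp] Ext.
by rewrite -(code x w v Gvw) Exy (IHp w Hp Ext) code.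
Qed.

Lemma index_code_length_ge (S : {set 'I_n}) l :
  (forall v, exists2 t, t \in S & connect G v t) ->
  has_index_code G l -> #|~: S| <= l.
Proof.
move=> reachS [E [D code]].
pose indicator (A : {set 'I_n}) : messages n := [ffun v => v \in A].
have inj_code : {in powerset (~: S) &, injective (E \o indicator)}.
  move=> A B; rewrite !inE => /subsetP subA /subsetP subB /= EAB.
  apply/setP=> v; have [t St Hvt] := reachS v.
  have offS C : {subset C <= ~: S} -> (t \in C) = false.
    by move=> subC; apply: contraTF St => /subC; rewrite inE.
  have := index_code_connect code EAB _ Hvt; rewrite !ffunE; apply.
  by rewrite !offS.
have := max_card (mem (image (E \o indicator) (powerset (~: S)))).
rewrite card_in_image // card_powerset card_tuple card_bool.
by rewrite leq_exp2l.
Qed.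

(* The bit sent for j; it is identically false at the roots of leaf SCCs,
   which is why those vertices need no bit. *)
Definition root_xor_bit (x : messages n) (j : 'I_n) : bool :=
  x j (+) (in_leaf_scc G j && x (scc_root G j)).

Definition root_xor_encode (x : messages n) : #|~: sink_roots G|.-tuple bool :=
  map_tuple (root_xor_bit x) (enum_tuple (~: sink_roots G)).

(* A vertex without a bit reads as [false]: [index] then points past the end. *)
Definition root_xor_read (c : #|~: sink_roots G|.-tuple bool) (j : 'I_n) : bool :=
  nth false c (index j (enum (~: sink_roots G))).

Lemma root_xor_readE x j :
  j \notin leaves G -> root_xor_read (root_xor_encode x) j = root_xor_bit x j.
Proof.
move=> nleafj; rewrite /root_xor_read.
have [Fj | notFj] := boolP (j \in ~: sink_roots G).
  by rewrite (nth_map j) ?nth_index ?index_mem ?mem_enum.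
rewrite nth_default; last by rewrite size_tuple memNindex ?mem_enum // -cardE.
move: notFj; rewrite in_setC negbK in_setU (negbTE nleafj) inE => /andP [sccj /eqP rootj].
by rewrite /root_xor_bit sccj rootj addbb.
Qed.

Definition root_xor_decode (i : 'I_n) (c : #|~: sink_roots G|.-tuple bool)
    (xi : bool) (j : 'I_n) : bool :=
  root_xor_read c j (+) (in_leaf_scc G j && (root_xor_read c i (+) xi)).

Lemma root_xor_index_code :
  is_index_code G root_xor_encode root_xor_decode.
Proof.
move=> x i j Gji.
have nleafj : j \notin leaves G.
  by rewrite inE negb_forall; apply/existsP; exists i; rewrite Gji.
rewrite /root_xor_decode root_xor_readE // /root_xor_bit.
have [sccj | _] := boolP (in_leaf_scc G j); last by rewrite /= !addbF.
have Eij := in_leaf_scc_arc sccj Gji.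
have scci : in_leaf_scc G i by rewrite /in_leaf_scc Eij.
rewrite root_xor_readE ?in_leaf_scc_notin_leaves // /root_xor_bit scci.
rewrite (scc_root_eq Eij) /=.
by case: (x i); case: (x j); case: (x (scc_root G j)).
Qed.

End IndexCodes.

Theorem corollary1 (n : nat) (G : rel 'I_n)
    (G_irrefl : forall i : 'I_n, ~~ G i i) :
  is_min_code_length G (n - #|leaves G| - N_SCC G).
Proof.
rewrite -card_not_sink_roots; split.
  by exists (root_xor_encode G), (@root_xor_decode n G); exact: root_xor_index_code.
by move=> l; apply: index_code_length_ge; exact: connect_sink_roots.
Qed.
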